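(* The category $\mathbb{O}$ is small and has pullbacks.
   Context: Fix a set $Act$ of action labels. An $Act$-labelled poset is $O=(X_O,\preccurlyeq_O,l_O)$ with $\preccurlyeq_O$ a partial order on the set $X_O$ and $l_O\colon X_O\to Act$. A morphism $O\to O'$ is a map $X_O\to X_{O'}$ that preserves order and labels; it is an order-embedding if moreover $\sigma(x)\preccurlyeq_{O'}\sigma(y)$ implies $x\preccurlyeq_O y$. $\mathcal{O}$ is the skeletal category of the category of finite $Act$-labelled posets and their morphisms (one chosen object per isomorphism class), and $\mathbb{O}$ is the subcategory of $\mathcal{O}$ with the same objects whose morphisms are the order-embeddings. *)

From mathcomp Require Import all_boot.
Set Implicit Arguments. Unset Strict Implicit. Unset Printing Implicit Defensive.

(* A finite Act-labelled poset, with carrier represented as 'I_n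
   (every finite labelled poset is isomorphic to one of this form). *)
Record lposet (Act : Type) := LPoset {
  lp_n : nat;
  lp_le : rel 'I_lp_n;
  lp_lab : 'I_lp_n -> Act;
  lp_refl : reflexive lp_le;
  lp_anti : antisymmetric lp_le;
  lp_trans : transitive lp_le }.

Section Defs.
Variable Act : Type.
Implicit Types O P Q : lposet Act.

Definition is_mor O O' (f : 'I_(lp_n O) -> 'I_(lp_n O')) : Prop :=
  (forall x y, lp_le x y -> lp_le (f x) (f y)) /\
  (forall x, lp_lab (f x) = lp_lab x).

(* order-embeddings: the morphisms of the category 𝕆 *)
Definition is_emb O O' (f : 'I_(lp_n O) -> 'I_(lp_n O')) : Prop :=
  is_mor f /\ (forall x y, lp_le (f x) (f y) -> lp_le x y).

Definition lp_iso O O' : Prop :=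
  exists (f : 'I_(lp_n O) -> 'I_(lp_n O')) (g : 'I_(lp_n O') -> 'I_(lp_n O)),
    [/\ is_mor f, is_mor g, cancel f g & cancel g f].

(* S selects exactly one object in each isomorphism class:
   the objects of the skeletal categories 𝒪 and 𝕆. *)
Definition skeleton (S : lposet Act -> Prop) : Prop :=
  (forall O, exists2 O', S O' & lp_iso O O') /\
  (forall O1 O2, S O1 -> S O2 -> lp_iso O1 O2 -> O1 = O2).

(* 𝕆 is small: its objects are encoded injectively in a set built from nat
   and Act, and each hom-set embeds in a finite set of functions. *)
Definition O_small (S : lposet Act -> Prop) : Prop :=
  (exists enc : {O | S O} -> {n : nat & (rel 'I_n * ('I_n -> Act))%type},
      injective enc) /\
  (forall O O', exists enc : {f : 'I_(lp_n O) -> 'I_(lp_n O') | is_emb f} ->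
                            {ffun 'I_(lp_n O) -> 'I_(lp_n O')}, injective enc).

(* 𝕆 has pullbacks (morphisms are compared as maps, i.e. pointwise). *)
Definition O_has_pullbacks (S : lposet Act -> Prop) : Prop :=
  forall A B C, S A -> S B -> S C ->
  forall (f : 'I_(lp_n A) -> 'I_(lp_n C)) (g : 'I_(lp_n B) -> 'I_(lp_n C)),
    is_emb f -> is_emb g ->
    exists P (p1 : 'I_(lp_n P) -> 'I_(lp_n A)) (p2 : 'I_(lp_n P) -> 'I_(lp_n B)),
      [/\ S P, is_emb p1, is_emb p2, f \o p1 =1 g \o p2 &
        forall Q (q1 : 'I_(lp_n Q) -> 'I_(lp_n A)) (q2 : 'I_(lp_n Q) -> 'I_(lp_n B)),
          S Q -> is_emb q1 -> is_emb q2 -> f \o q1 =1 g \o q2 ->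
          exists u : 'I_(lp_n Q) -> 'I_(lp_n P),
            [/\ is_emb u, p1 \o u =1 q1, p2 \o u =1 q2 &
              forall u' : 'I_(lp_n Q) -> 'I_(lp_n P),
                is_emb u' -> p1 \o u' =1 q1 -> p2 \o u' =1 q2 -> u' =1 u]].

End Defs.

(* The pullback of two order-embeddings [f : A -> C] and [g : B -> C] is the
   set of pairs [(a, b)] with [f a = g b], ordered and labelled through the
   first component.  Since [g] is injective the first projection is injective,
   which makes this order antisymmetric and gives uniqueness of mediating maps;
   it is an embedding by construction, and the second projection is one because
   [f] and [g] are.  Transporting along an isomorphism moves the pullback into
   the skeleton.  Smallness holds because a labelled poset on ['I_n] is
   determined by its order relation and labelling, and hom-sets are sets of
   functions between finite types. *)
From mathcomp Require Import all_boot.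
From Stdlib Require Import FunctionalExtensionality ProofIrrelevance.
Set Implicit Arguments. Unset Strict Implicit. Unset Printing Implicit Defensive.

Section Embeddings.
Variable Act : Type.
Implicit Types O : lposet Act.

Lemma is_emb_inj O O' (f : 'I_(lp_n O) -> 'I_(lp_n O')) :
  is_emb f -> injective f.
Proof.
move=> [_ refl_f] x y fxy; apply: lp_anti.
by rewrite !refl_f // fxy lp_refl.
Qed.

Lemma is_emb_comp (O1 O2 O3 : lposet Act) (f : 'I_(lp_n O1) -> 'I_(lp_n O2))
    (g : 'I_(lp_n O2) -> 'I_(lp_n O3)) :
  is_emb f -> is_emb g -> is_emb (g \o f).
Proof.
move=> [[mono_f lab_f] refl_f] [[mono_g lab_g] refl_g]; split; [split|] => /=.
- by move=> x y /mono_f /mono_g.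
- by move=> x; rewrite lab_g lab_f.
- by move=> x y /refl_g /refl_f.
Qed.

Lemma can_is_emb O O' (h : 'I_(lp_n O) -> 'I_(lp_n O'))
    (h' : 'I_(lp_n O') -> 'I_(lp_n O)) :
  is_mor h -> is_mor h' -> cancel h h' -> is_emb h.
Proof. by move=> mor_h [mono_h' _] hK; split=> // x y /mono_h'; rewrite !hK. Qed.

End Embeddings.

Definition is_pullback Act (A B C P : lposet Act)
    (f : 'I_(lp_n A) -> 'I_(lp_n C)) (g : 'I_(lp_n B) -> 'I_(lp_n C))
    (p1 : 'I_(lp_n P) -> 'I_(lp_n A)) (p2 : 'I_(lp_n P) -> 'I_(lp_n B)) : Prop :=
  [/\ is_emb p1, is_emb p2, f \o p1 =1 g \o p2 &
    forall Q (q1 : 'I_(lp_n Q) -> 'I_(lp_n A)) (q2 : 'I_(lp_n Q) -> 'I_(lp_n B)),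
      is_emb q1 -> is_emb q2 -> f \o q1 =1 g \o q2 ->
      exists u : 'I_(lp_n Q) -> 'I_(lp_n P),
        [/\ is_emb u, p1 \o u =1 q1, p2 \o u =1 q2 &
          forall u', p1 \o u' =1 q1 -> p2 \o u' =1 q2 -> u' =1 u]].

Section Pullback.
Variables (Act : Type) (A B C : lposet Act).
Variables (f : 'I_(lp_n A) -> 'I_(lp_n C)) (g : 'I_(lp_n B) -> 'I_(lp_n C)).
Hypotheses (emb_f : is_emb f) (emb_g : is_emb g).

Definition pb_pair : finType := {x : 'I_(lp_n A) * 'I_(lp_n B) | f x.1 == g x.2}.

Definition pb_fst (i : 'I_#|pb_pair|) : 'I_(lp_n A) := (val (enum_val i)).1.
Definition pb_snd (i : 'I_#|pb_pair|) : 'I_(lp_n B) := (val (enum_val i)).2.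

Lemma pb_commute i : f (pb_fst i) = g (pb_snd i).
Proof. by apply/eqP; apply: valP (enum_val i). Qed.

Lemma pb_fst_inj : injective pb_fst.
Proof.
move=> i j eq_fst; apply: enum_val_inj; apply: val_inj.
have eq_snd : pb_snd i = pb_snd j.
  by apply: (is_emb_inj emb_g); rewrite -!pb_commute /= eq_fst.
exact: injective_projections eq_fst eq_snd.
Qed.

Definition pb_le : rel 'I_#|pb_pair| := fun i j => lp_le (pb_fst i) (pb_fst j).

Lemma pb_le_refl : reflexive pb_le.
Proof. by move=> i; apply: lp_refl. Qed.

Lemma pb_le_anti : antisymmetric pb_le.
Proof. by move=> i j /lp_anti; apply: pb_fst_inj. Qed.

Lemma pb_le_trans : transitive pb_le.
Proof. by move=> i j k; apply: lp_trans. Qed.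

Definition pb_lposet : lposet Act :=
  LPoset (fun i => lp_lab (pb_fst i)) pb_le_refl pb_le_anti pb_le_trans.

Lemma pb_fst_emb : is_emb (pb_fst : 'I_(lp_n pb_lposet) -> _).
Proof. by []. Qed.

Lemma pb_snd_emb : is_emb (pb_snd : 'I_(lp_n pb_lposet) -> _).
Proof.
move: emb_f emb_g => [[mono_f lab_f] refl_f] [[mono_g lab_g] refl_g].
split; [split|] => /=.
- by move=> i j /mono_f le_ij; apply: refl_g; rewrite -!pb_commute.
- by move=> i; rewrite -lab_g -pb_commute /= lab_f.
- by move=> i j /mono_g le_ij; apply: refl_f; rewrite !pb_commute.
Qed.

Lemma pb_universal Q (q1 : 'I_(lp_n Q) -> 'I_(lp_n A))
    (q2 : 'I_(lp_n Q) -> 'I_(lp_n B)) :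
  is_emb q1 -> f \o q1 =1 g \o q2 ->
  exists u : 'I_(lp_n Q) -> 'I_(lp_n pb_lposet),
    [/\ is_emb u, pb_fst \o u =1 q1 & pb_snd \o u =1 q2].
Proof.
move=> [[mono_q1 lab_q1] refl_q1] comm_q.
have q_pair x : f (q1 x) == g (q2 x) by apply/eqP; apply: comm_q.
pose u x : 'I_#|pb_pair| := enum_rank (exist _ (q1 x, q2 x) (q_pair x)).
have u_fst x : pb_fst (u x) = q1 x by rewrite /pb_fst enum_rankK.
have u_snd x : pb_snd (u x) = q2 x by rewrite /pb_snd enum_rankK.
exists u; split=> //; split; [split|] => /=.
- by move=> x y; rewrite /pb_le !u_fst; apply: mono_q1.
- by move=> x; rewrite u_fst lab_q1.
- by move=> x y; rewrite /pb_le !u_fst; apply: refl_q1.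
Qed.

Lemma pullback_exists :
  exists P (p1 : 'I_(lp_n P) -> 'I_(lp_n A)) (p2 : 'I_(lp_n P) -> 'I_(lp_n B)),
    is_pullback f g p1 p2.
Proof.
exists pb_lposet, pb_fst, pb_snd; split.
- exact: pb_fst_emb.
- exact: pb_snd_emb.
- exact: pb_commute.
move=> Q q1 q2 emb_q1 _ comm_q.
have [u [emb_u u_fst u_snd]] := pb_universal emb_q1 comm_q.
exists u; split=> // u' u'_fst _ x.
by apply: pb_fst_inj; move: (u'_fst x) (u_fst x) => /= -> ->.
Qed.

End Pullback.

Lemma is_pullback_iso Act (A B C P0 P : lposet Act)
    (f : 'I_(lp_n A) -> 'I_(lp_n C)) (g : 'I_(lp_n B) -> 'I_(lp_n C))
    (p1 : 'I_(lp_n P0) -> 'I_(lp_n A)) (p2 : 'I_(lp_n P0) -> 'I_(lp_n B)) :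
  is_pullback f g p1 p2 -> lp_iso P0 P ->
  exists (p1' : 'I_(lp_n P) -> 'I_(lp_n A)) (p2' : 'I_(lp_n P) -> 'I_(lp_n B)),
    is_pullback f g p1' p2'.
Proof.
move=> [emb_p1 emb_p2 comm_p univ_p] [h [h' [mor_h mor_h' hK h'K]]].
have emb_h := can_is_emb mor_h mor_h' hK.
have emb_h' := can_is_emb mor_h' mor_h h'K.
exists (p1 \o h'), (p2 \o h'); split.
- exact: is_emb_comp.
- exact: is_emb_comp.
- by move=> x; apply: comm_p.
move=> Q q1 q2 emb_q1 emb_q2 comm_q.
have [u [emb_u u_fst u_snd u_uniq]] := univ_p Q q1 q2 emb_q1 emb_q2 comm_q.
exists (h \o u); split.
- exact: is_emb_comp.
- by move=> x /=; rewrite hK; apply: u_fst.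
- by move=> x /=; rewrite hK; apply: u_snd.
move=> u' u'_fst u'_snd x /=.
by rewrite -(u_uniq (h' \o u') u'_fst u'_snd x) /= h'K.
Qed.

Definition lposet_code Act (O : lposet Act) :
    {n : nat & (rel 'I_n * ('I_n -> Act))%type} :=
  existT _ (lp_n O) (@lp_le _ O, @lp_lab _ O).

Lemma lposet_code_inj Act : injective (@lposet_code Act).
Proof.
move=> [n1 le1 lab1 refl1 anti1 trans1] [n2 le2 lab2 refl2 anti2 trans2] eq_code.
have eq_n := f_equal (@projT1 _ _) eq_code; rewrite /= in eq_n; subst n2.
have [eq_le eq_lab] := @eq_from_Tagged _ _ _ _ _ eq_code; subst le2 lab2.
by congr LPoset; apply: proof_irrelevance.
Qed.

Lemma sval_inj T (P : T -> Prop) : injective (@proj1_sig T P).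
Proof. by move=> [x Px] [y Py] /= eq_xy; subst y; congr exist; apply: proof_irrelevance. Qed.

Lemma finfun_sval_inj (aT : finType) rT (P : (aT -> rT) -> Prop) :
  injective (fun F : {F : aT -> rT | P F} => finfun (sval F)).
Proof.
move=> F1 F2 /ffunP eq_F; apply: sval_inj; apply: functional_extensionality => x.
by move: (eq_F x); rewrite !ffunE.
Qed.

Theorem proposition6 (Act : Type) (S : lposet Act -> Prop) :
  skeleton S -> O_small S /\ O_has_pullbacks S.
Proof.
move=> [S_repr _]; split.
  split; last by move=> O O'; exists (fun F => finfun (sval F)); apply: finfun_sval_inj.
  exists (fun O => lposet_code (sval O)) => O1 O2 /lposet_code_inj.
  exact: sval_inj.
move=> A B C _ _ _ f g emb_f emb_g.
have [P0 [p1 [p2 pb_P0]]] := pullback_exists emb_f emb_g.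
have [P S_P iso_P] := S_repr P0.
have [q1 [q2 [emb_q1 emb_q2 comm_q univ_q]]] := is_pullback_iso pb_P0 iso_P.
exists P, q1, q2; split=> // Q r1 r2 _ emb_r1 emb_r2 comm_r.
have [u [emb_u u_fst u_snd u_uniq]] := univ_q Q r1 r2 emb_r1 emb_r2 comm_r.
by exists u; split=> // u' _; apply: u_uniq.
Qed.
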